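(* Let $N\ge 1$ and consider a network with feature tensors $X_0,X_1,\dots,X_N$, where $X_L\in\mathbb{R}^{K\times \mathrm{rows}_L\times \mathrm{cols}_L}$, defined for $L=1,\dots,N$ by $$U_L=\mathrm{ReLU}\Big(\big(1-\tfrac1L\big)X_{L-1}+\tfrac1L\tanh\big(F_L(X_{L-1})\big)\Big),\qquad X_L=M_L(U_L),$$ where each $F_L:\mathbb{R}^{K\times\mathrm{rows}_{L-1}\times\mathrm{cols}_{L-1}}\to\mathbb{R}^{K\times\mathrm{rows}_{L-1}\times\mathrm{cols}_{L-1}}$ is an arbitrary map, $\mathrm{ReLU},\tanh$ act entrywise, and each $M_L$ is either the identity or a non-overlapping (stride = kernel) spatial max pooling, channelwise. Assume $\mathrm{rows}_T$ divides $\mathrm{rows}_L$ and $\mathrm{cols}_T$ divides $\mathrm{cols}_L$ whenever $L\le T$. For $0\le L\le T\le N$ define rescaled maps $S^{(T)}_0=0$ and, for $L\ge1$, $$S^{(T)}_L=\frac{L}{N}\,\mathrm{Pool}(X_L,T),\qquad \mathrm{Pool}(X_L,T)=\mathrm{MaxPool}\Big(X_L,\ \mathrm{ker}=\big(\tfrac{\mathrm{rows}_L}{\mathrm{rows}_T},\tfrac{\mathrm{cols}_L}{\mathrm{cols}_T}\big)\Big)$$ (non-overlapping, channelwise). Then (bounded increment through depth) for every target layer $T$ with $1\le T\le N$, every $1\le L\le T$, every channel $k$ and every position $(x,y)$, $$\Big|S^{(T)}_{L,k}(x,y)-S^{(T)}_{L-1,k}(x,y)\Big|\le \delta,\qquad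 \delta=\frac1N.$$
   Context: This is the ''feature-aligned'' CNN with dampened skip connections: layer $L$ mixes the previous features with weight $1-\beta$ and a $\tanh$-bounded block output with weight $\beta=1/L$, followed by ReLU and optionally max pooling. $N$ is the total number of layers (denoted $N_L$ in the paper). All feature tensors have the same number $K$ of channels; $X_0$ is an arbitrary real tensor (the projected input). *)

From mathcomp Require Import all_boot all_order all_algebra.
From mathcomp Require Import reals.
From mathcomp.analysis Require Import sequences exp.
Set Implicit Arguments. Unset Strict Implicit. Unset Printing Implicit Defensive.
Import Order.TTheory GRing.Theory Num.Theory.
Local Open Scope ring_scope.

Definition tensor (R : Type) (K r c : nat) := 'I_K -> 'I_r -> 'I_c -> R.

Section Defs.
Variable R : realType.

Definition relu (x : R) : R := Num.max 0 x.

Definition tanh (x : R) : R := (expR x - expR (- x)) / (expR x + expR (- x)).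

(* Maximum of a finite list of reals (the head is used as neutral element,
   so for a nonempty list this is exactly its maximum). *)
Definition seqmax (s : seq R) : R := \big[Num.max/head 0 s]_(v <- s) v.

Definition maxpool (K r c r' c' : nat) (X : tensor R K r c) : tensor R K r' c' :=
  fun k x y =>
    seqmax [seq X k ij.1 ij.2 | ij <- enum [pred ij : 'I_r * 'I_c |
               ((ij.1 %/ (r %/ r'))%N == x) && ((ij.2 %/ (c %/ c'))%N == y)]].

Definition layer_pre (K r c : nat) (L : nat) (F : tensor R K r c -> tensor R K r c)
  (Xprev : tensor R K r c) : tensor R K r c :=
  fun k i j => relu ((1 - L%:R^-1) * Xprev k i j + L%:R^-1 * tanh (F Xprev k i j)).

Definition rescaled (K N : nat) (rows cols : nat -> nat)
  (X : forall L, tensor R K (rows L) (cols L)) (T L : nat) : tensor R K (rows T) (cols T) :=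
  fun k x y =>
    if L == 0%N then 0
    else L%:R / N%:R * maxpool (X L) k x y.

End Defs.
Arguments rescaled {R K} N {rows cols} X T L _ _ _.

From mathcomp Require Import all_boot all_order all_algebra.
From mathcomp Require Import reals.
From mathcomp.analysis Require Import sequences exp.
From mathcomp Require Import lra.
Import Order.TTheory GRing.Theory Num.Theory.
Local Open Scope ring_scope.

(* Write U_L for the ReLU output before pooling.  Since tanh is bounded by 1
   and the previous features are nonnegative, L U_L differs from (L-1) X_{L-1}
   by at most 1 entrywise.  Nested non-overlapping max poolings compose to a
   single one, so Pool(X_L, T) is the pooling of U_L to the grid of T, and
   max pooling commutes with nonnegative scaling and is 1-Lipschitz for the
   sup norm.  Hence L Pool(X_L, T) and (L-1) Pool(X_{L-1}, T) differ by at
   most 1, and dividing by N gives the bound. *)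

Lemma divn_div_dvdn {p q t : nat} (i : nat) : (t %| q)%N -> (q %| p)%N ->
  (i %/ (p %/ q) %/ (q %/ t))%N = (i %/ (p %/ t))%N.
Proof. by move=> tq qp; rewrite -divnMA muln_divA // divnK. Qed.

Lemma ltn_div_dvdn {p q i : nat} : (q %| p)%N -> (i < p)%N -> (i %/ (p %/ q) < q)%N.
Proof.
move=> qp ip; have p_gt0 : (0 < p)%N := leq_ltn_trans (leq0n i) ip.
have q_gt0 : (0 < q)%N by case: q qp => // /[!dvd0n] /eqP p0; rewrite p0 in p_gt0.
have d_gt0 : (0 < p %/ q)%N by rewrite divn_gt0 // dvdn_leq.
by rewrite ltn_divLR // mulnC divnK.
Qed.

Section MaxPool.
Variable R : realType.

Lemma le_seqmax (v : R) (s : seq R) : v \in s -> v <= seqmax s.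
Proof.
rewrite /seqmax; elim: s (head 0 s) => // a s IH h.
by rewrite in_cons big_cons le_max => /orP[/eqP-> | /IH->]; rewrite ?lexx ?orbT.
Qed.

(* The bound must be nonnegative: the maximum of the empty list is 0. *)
Lemma seqmax_le (s : seq R) (b : R) : 0 <= b -> (forall v, v \in s -> v <= b) ->
  seqmax s <= b.
Proof.
move=> b0 sb; rewrite /seqmax big_seq; apply: (big_ind (fun u => u <= b)) => //.
- by case: s sb => //= a s sb; apply: sb; rewrite mem_head.
- by move=> u v ub vb; rewrite ge_max ub vb.
Qed.

Lemma seqmax_ge0 (s : seq R) : (forall v, v \in s -> 0 <= v) -> 0 <= seqmax s.
Proof.
case: s => [|a s] s0; first by rewrite /seqmax big_nil.
by apply: le_trans (s0 a (mem_head _ _)) _; apply: le_seqmax; rewrite mem_head.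
Qed.

Lemma mulr_seqmax (a : R) (s : seq R) : 0 <= a ->
  a * seqmax s = seqmax [seq a * v | v <- s].
Proof.
move=> a0; rewrite /seqmax big_map.
by apply: (big_morph ( *%R a)) => [u v|]; [exact: maxr_pMr | case: s => //=; rewrite mulr0].
Qed.

Variables (K r c r' c' : nat).
Implicit Types (A B : tensor R K r c) (k : 'I_K) (x : 'I_r') (y : 'I_c').

Lemma le_maxpool A k x y (i : 'I_r) (j : 'I_c) :
  (i %/ (r %/ r'))%N = x -> (j %/ (c %/ c'))%N = y ->
  A k i j <= maxpool A k x y.
Proof.
move=> ix jy; apply: le_seqmax; apply/mapP; exists (i, j) => //.
by rewrite mem_enum inE /= ix jy !eqxx.
Qed.

Lemma maxpool_le A k x y (b : R) : 0 <= b ->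
  (forall (i : 'I_r) (j : 'I_c), (i %/ (r %/ r'))%N = x -> (j %/ (c %/ c'))%N = y ->
     A k i j <= b) ->
  maxpool A k x y <= b.
Proof.
move=> b0 Ab; apply: seqmax_le => // v /mapP[[i j]].
by rewrite mem_enum inE => /andP[/eqP ix /eqP jy] ->; apply: Ab.
Qed.

Lemma maxpool_ge0 A k x y : (forall i j, 0 <= A k i j) -> 0 <= maxpool A k x y.
Proof. by move=> A0; apply: seqmax_ge0 => _ /mapP[ij _ ->]. Qed.

Lemma mulr_maxpool (a : R) A k x y : 0 <= a ->
  a * maxpool A k x y = maxpool (fun k i j => a * A k i j) k x y.
Proof. by move=> a0; rewrite /maxpool mulr_seqmax // -map_comp. Qed.

Lemma maxpool_le_shift A B k x y (d : R) :
  0 <= maxpool B k x y + d -> (forall i j, A k i j <= B k i j + d) ->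
  maxpool A k x y <= maxpool B k x y + d.
Proof.
move=> Bd0 AB; apply: maxpool_le => // i j ix jy.
by rewrite (le_trans (AB i j)) // lerD2r le_maxpool.
Qed.

Lemma dist_maxpool_le A B k x y (d : R) : 0 <= d ->
  (forall i j, 0 <= A k i j) -> (forall i j, 0 <= B k i j) ->
  (forall i j, `|A k i j - B k i j| <= d) ->
  `|maxpool A k x y - maxpool B k x y| <= d.
Proof.
move=> d0 A0 B0 AB; rewrite ler_distlC; apply/andP; split.
- rewrite lerBlDr; apply: maxpool_le_shift => [|i j].
    by rewrite addr_ge0 ?maxpool_ge0.
  by have := AB i j; rewrite ler_distlC lerBlDr => /andP[].
- apply: maxpool_le_shift => [|i j].
    by rewrite addr_ge0 ?maxpool_ge0.
  by have := AB i j; rewrite ler_distlC => /andP[].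
Qed.

End MaxPool.

Section MaxPoolComp.
Variables (R : realType) (K r0 c0 r1 c1 r2 c2 : nat).
Hypotheses (r10 : (r1 %| r0)%N) (r21 : (r2 %| r1)%N).
Hypotheses (c10 : (c1 %| c0)%N) (c21 : (c2 %| c1)%N).

Lemma maxpool_maxpool (A : tensor R K r0 c0) k (x : 'I_r2) (y : 'I_c2) :
  (forall k i j, 0 <= A k i j) ->
  @maxpool R K r1 c1 r2 c2 (@maxpool R K r0 c0 r1 c1 A) k x y =
  @maxpool R K r0 c0 r2 c2 A k x y.
Proof.
move=> A0; apply/le_anti/andP; split.
- apply: maxpool_le => [|i1 j1 i1x j1y]; first exact: maxpool_ge0.
  apply: maxpool_le => [|i j ii1 jj1]; first exact: maxpool_ge0.
  apply: le_maxpool.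
    by rewrite -(divn_div_dvdn i r21 r10) ii1.
  by rewrite -(divn_div_dvdn j c21 c10) jj1.
- apply: maxpool_le => [|i j ix jy]; first by do 2![apply: maxpool_ge0 => ? ?].
  pose i1 := Ordinal (ltn_div_dvdn r10 (ltn_ord i)).
  pose j1 := Ordinal (ltn_div_dvdn c10 (ltn_ord j)).
  apply: (@le_trans _ _ (@maxpool R K r0 c0 r1 c1 A k i1 j1)); first exact: le_maxpool.
  by apply: le_maxpool; rewrite /= divn_div_dvdn.
Qed.

End MaxPoolComp.

Section Layer.
Variable R : realType.

Lemma tanh_itv (t : R) : -1 <= tanh t <= 1.
Proof.
have e_gt0 := expR_gt0 t; have eN_gt0 := expR_gt0 (- t).
rewrite /tanh ler_pdivlMr ?ler_pdivrMr ?addr_gt0 // !mulN1r mul1r.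
by apply/andP; split; lra.
Qed.

Lemma relu_ge0 (z : R) : 0 <= relu z.
Proof. by rewrite /relu le_max lexx. Qed.

Lemma mulr_relu (a z : R) : 0 <= a -> a * relu z = relu (a * z).
Proof. by move=> a0; rewrite /relu maxr_pMr // mulr0. Qed.

Lemma dist_relu_shift_le (a t : R) : 0 <= a -> `|t| <= 1 -> `|relu (a + t) - a| <= 1.
Proof.
rewrite ler_norml => a0 /andP[t_ge t_le].
rewrite ler_distl /relu le_max ge_max; apply/andP; split.
- by apply/orP; right; lra.
- by apply/andP; split; lra.
Qed.

Lemma layer_pre_scaled K r c m (G : tensor R K r c -> tensor R K r c)
    (Y : tensor R K r c) k i j :
  m.+1%:R * layer_pre m.+1 G Y k i j = relu (m%:R * Y k i j + tanh (G Y k i j)).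
Proof.
have m1_neq0 : m.+1%:R != 0 :> R by rewrite pnatr_eq0.
rewrite /layer_pre mulr_relu // mulrDr !mulrA mulrBr mulr1 !mulfV // mul1r.
by rewrite -natr1 addrK.
Qed.

Lemma dist_layer_pre_le K r c m (G : tensor R K r c -> tensor R K r c)
    (Y : tensor R K r c) k i j :
  0 <= m%:R * Y k i j -> `|m.+1%:R * layer_pre m.+1 G Y k i j - m%:R * Y k i j| <= 1.
Proof.
by move=> mY0; rewrite layer_pre_scaled dist_relu_shift_le // ler_norml tanh_itv.
Qed.

End Layer.

Lemma rescaledE (R : realType) K N (rows cols : nat -> nat)
    (X : forall L, tensor R K (rows L) (cols L)) T L k x y :
  rescaled N X T L k x y =
  L%:R / N%:R * @maxpool R K (rows L) (cols L) (rows T) (cols T) (X L) k x y.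
Proof. by rewrite /rescaled; case: eqP => // ->; rewrite !mul0r. Qed.

Theorem theorem2 (R : realType) (N K : nat) (rows cols : nat -> nat)
  (X : forall L : nat, tensor R K (rows L) (cols L))
  (F : forall L : nat, tensor R K (rows L.-1) (cols L.-1) -> tensor R K (rows L.-1) (cols L.-1))
  (hN : (1 <= N)%N)
  (hpos : forall L, (L <= N)%N -> (0 < rows L)%N /\ (0 < cols L)%N)
  (hdiv : forall L T, (L <= T)%N -> (T <= N)%N ->
            (rows T %| rows L)%N /\ (cols T %| cols L)%N)
  (hX : forall L, (1 <= L)%N -> (L <= N)%N ->
          X L = maxpool (layer_pre L (F L) (X L.-1))) :
  forall T, (1 <= T)%N -> (T <= N)%N ->
  forall L, (1 <= L)%N -> (L <= T)%N ->
  forall (k : 'I_K) (x : 'I_(rows T)) (y : 'I_(cols T)),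
    `| rescaled N X T L k x y - rescaled N X T L.-1 k x y | <= N%:R^-1.
Proof.
move=> T _ TN [//|m] _ LT k x y.
have LN : (m.+1 <= N)%N := leq_trans LT TN.
have mX_ge0 k' i j : 0 <= m%:R * X m k' i j.
  case: m {LT} LN k' i j => [|n] LN k' i j; first by rewrite mul0r.
  rewrite (hX n.+1 isT (ltnW LN)) mulr_ge0 // maxpool_ge0 // => ? ?.
  exact: relu_ge0.
have U_ge0 k' i j : 0 <= layer_pre m.+1 (F m.+1) (X m) k' i j := relu_ge0 _ _.
have [rLT cLT] := hdiv _ _ LT TN.
have [rmL cmL] := hdiv _ _ (leqnSn m) LN.
rewrite !rescaledE /= mulrAC [m%:R / _ * _]mulrAC -mulrBl.
rewrite normrM normfV normr_nat; apply: ler_piMl; first by rewrite invr_ge0.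
rewrite (hX m.+1) // maxpool_maxpool // !mulr_maxpool //.
apply: dist_maxpool_le => // i j; first by rewrite mulr_ge0.
exact: dist_layer_pre_le.
Qed.
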